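(* Let $\delta>1$ and let $P_1,\dots,P_n\in\mathbb{R}^d$ be distinct points such that every pairwise distance $c_{ij}=\|P_i-P_j\|$ ($i\neq j$) lies in $\{1,\delta\}$. Suppose the points are labeled so that $c_{in}=1$ for $1\le i\le h$ and $c_{in}=\delta$ for $h<i\le n-1$ (for some $0\le h\le n-1$). Let $M$ be the $(n-1)\times(n-1)$ matrix $M=(c_{in}^2+c_{jn}^2-c_{ij}^2)_{i,j=1}^{n-1}$ (with $c_{ii}=0$), let \[ D=\begin{bmatrix}(-3+\delta^2)J_h & -(1+\delta^2)J_{h,n-h-1}\\ -(1+\delta^2)J_{n-h-1,h} & (1-3\delta^2)J_{n-h-1}\end{bmatrix} \] (with $J_{p,q}$ the $p\times q$ all-ones matrix, $J_p=J_{p,p}$), and let \[ S=\frac{2M+D-(1+\delta^2)I_{n-1}}{\delta^2-1}. \] Let $\lambda_1\ge\lambda_2\ge\dots\ge\lambda_{n-1}$ be the eigenvalues of $S$ counted with multiplicity. Then $\lambda_i=\frac{1+\delta^2}{1-\delta^2}$ for every index $i$ with $d+2\le i\le n-2$, and $\lambda_{n-1}\le\frac{1+\delta^2}{1-\delta^2}$ whenever $n\ge d+3$. That is, $S$ has smallest eigenvalue $\lambda_{n-1}$ (counted once) and second smallest eigenvalue $\frac{1+\delta^2}{1-\delta^2}$, the latter with multiplicity at least $n-d-3$.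
   Context: $S$ is a Seidel matrix: a real symmetric matrix with zero diagonal and all off-diagonal entries equal to $\pm1$. The matrix $M$ is positive semidefinite of rank at most $d$ (it is twice the Gram matrix of the vectors $P_i-P_n$). *)

From HB Require Import structures.
From mathcomp Require Import all_boot all_order all_algebra.
From mathcomp Require Import reals.
Set Implicit Arguments. Unset Strict Implicit. Unset Printing Implicit Defensive.
Import Order.TTheory GRing.Theory Num.Theory.
Local Open Scope ring_scope.

Definition edist (R : realType) (d : nat) (x y : 'rV[R]_d) : R :=
  Num.sqrt (\sum_(k < d) (x 0 k - y 0 k) ^+ 2).

Section Construction.
(* The n points of the paper are P_1..P_{n-1}, given as P : 'I_n.-1 -> R^d
   (0-based: paper's P_{i+1} is P i), and P_n, given as Q. *)
Variables (R : realType) (d n h : nat) (delta : R)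
  (P : 'I_n.-1 -> 'rV[R]_d) (Q : 'rV[R]_d).

Definition Mmat : 'M[R]_(n.-1) :=
  \matrix_(i, j) (edist (P i) Q ^+ 2 + edist (P j) Q ^+ 2
                  - edist (P i) (P j) ^+ 2).

Definition Dmat : 'M[R]_(n.-1) :=
  \matrix_(i, j)
    if (i < h)%N then (if (j < h)%N then -3 + delta ^+ 2 else - (1 + delta ^+ 2))
    else (if (j < h)%N then - (1 + delta ^+ 2) else 1 - 3 * delta ^+ 2).

Definition Smat : 'M[R]_(n.-1) :=
  (delta ^+ 2 - 1)^-1 *: (2%:R *: Mmat + Dmat - (1 + delta ^+ 2)%:M).
End Construction.

(* Let G be the matrix with rows P_i - P_n and 1 the all-ones vector.  By
   polarization 2M = 4 G G^T, and D = (l 1^T + 1 l^T)/2 where l has entries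
   delta^2 - 3 on the first block and 1 - 3 delta^2 on the second.  Hence, for
   theta = (1 + delta^2)/(1 - delta^2),
     S - theta I = (delta^2 - 1)^-1 (4 G G^T + (l 1^T + 1 l^T)/2),
   a positive semidefinite matrix of rank at most d plus a symmetric rank-two
   term through 1.  Its quadratic form vanishes on the kernel of [G 1], of
   codimension at most d + 1, and is nonnegative on the kernel of 1^T, of
   codimension 1.  By the Courant-Fischer count, S has at most d + 1
   eigenvalues above theta and at most one below it, and sorting pins all
   the others to theta. *)

From HB Require Import structures.
From mathcomp Require Import all_boot all_order all_algebra.
From mathcomp Require Import reals complex ring lra zify.
Set Implicit Arguments. Unset Strict Implicit. Unset Printing Implicit Defensive.
Import Order.TTheory GRing.Theory Num.Theory.
Local Open Scope ring_scope.

Section NonincreasingSequence.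
Context {disp : Order.disp_t} {T : orderType disp}.
Local Open Scope order_scope.
Variables (x0 : T) (s : seq T).
Hypothesis s_noninc : sorted (fun x y => y <= x) s.

Lemma nth_noninc i j : (i <= j < size s)%N -> nth x0 s j <= nth x0 s i.
Proof.
move=> /andP[le_ij lt_js].
have ge_trans : transitive (fun x y : T => y <= x).
  by move=> y x z le_yx le_zy; apply: le_trans le_zy le_yx.
by apply: (sorted_leq_nth ge_trans _ x0 s_noninc) => //; rewrite inE; lia.
Qed.

Lemma nth_le_of_count_gt θ a i :
  (count (> θ) s <= a)%N -> (a <= i < size s)%N -> nth x0 s i <= θ.
Proof.
move=> count_le /andP[le_ai lt_is]; rewrite leNgt; apply/negP => lt_θi.
have : all (> θ) (take i.+1 s).
  apply/(all_nthP x0) => j; rewrite size_takel // => lt_ji.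
  by rewrite nth_take // (lt_le_trans lt_θi) // nth_noninc //; lia.
rewrite all_count => /eqP; have := count_cat (> θ) (take i.+1 s) (drop i.+1 s).
rewrite cat_take_drop size_takel //; lia.
Qed.

Lemma nth_ge_of_count_lt θ b i :
  (count (< θ) s <= b)%N -> (i + b < size s)%N -> θ <= nth x0 s i.
Proof.
move=> count_le lt_ibs; rewrite leNgt; apply/negP => lt_iθ.
have : all (< θ) (drop i s).
  apply/(all_nthP x0) => j; rewrite size_drop => lt_j.
  by rewrite nth_drop; apply: le_lt_trans lt_iθ; apply: nth_noninc; lia.
rewrite all_count => /eqP count_drop.
have := count_cat (< θ) (take i s) (drop i s).
rewrite cat_take_drop count_drop size_drop => count_s.
by move: count_le; rewrite count_s leqNgt ltn_addl // ltn_subRL.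
Qed.
End NonincreasingSequence.

Lemma exists_supported_row_ker (F : fieldType) N k (J : {pred 'I_N})
    (B : 'M[F]_(N, k)) :
  (k < #|J|)%N ->
  exists c : 'rV[F]_N, [/\ c != 0, c *m B = 0 & forall j, j \notin J -> c 0 j = 0].
Proof.
move=> lt_kJ; pose E : 'M[F]_(#|J|, N) := rowsub enum_val 1%:M.
have : kermx (E *m B) != 0.
  rewrite kermx_eq0 /row_free; apply: contraTneq lt_kJ => <-.
  by rewrite -leqNgt rank_leq_col.
case/rowV0Pn => w /sub_kermxP wEB w_neq0; exists (w *m E); split.
- have c_enum a : (w *m E) 0 (enum_val a) = w 0 a.
    rewrite mxE (bigD1 a) //= big1 => [|b neq_ba]; rewrite !mxE.
      by rewrite eqxx mulr1 addr0.
    by rewrite (inj_eq enum_val_inj) (negPf neq_ba) mulr0.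
  by apply: contraNneq w_neq0 => wE0; apply/eqP/rowP => a; rewrite -c_enum wE0 !mxE.
- by rewrite -mulmxA.
- move=> j j_notin; rewrite mxE big1 // => a _; rewrite !mxE.
  by case: eqP => [eq_aj|_]; [move: (enum_valP a); rewrite eq_aj (negPf j_notin) | rewrite mulr0].
Qed.

Lemma char_poly_similar (F : fieldType) n (U A : 'M[F]_n) :
  U \in unitmx -> char_poly (invmx U *m A *m U) = char_poly A.
Proof.
move=> U_unit; rewrite /char_poly /char_poly_mx.
have -> : 'X%:M - map_mx polyC (invmx U *m A *m U) =
    map_mx polyC (invmx U) *m ('X%:M - map_mx polyC A) *m map_mx polyC U.
  rewrite mulmxBr mulmxBl !map_mxM; congr (_ - _).
  by rewrite mul_mx_scalar -scalemxAl -map_mxM mulVmx // map_mx1 scalemx1.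
by rewrite !det_mulmx mulrAC -det_mulmx -map_mxM mulVmx // map_mx1 det1 mul1r.
Qed.

Section SpectralCount.
Variable C : numClosedFieldType.
Local Open Scope sesquilinear_scope.

Lemma trmxC_mul m n p (A : 'M[C]_(m, n)) (B : 'M[C]_(n, p)) :
  (A *m B) ^t* = B ^t* *m A ^t*.
Proof. by rewrite trmx_mul map_mxM. Qed.

Lemma form_self_ge0 m (w : 'rV[C]_m) : 0 <= (w *m w ^t*) 0 0.
Proof. by rewrite mxE; apply: sumr_ge0 => k _; rewrite !mxE mul_conjC_ge0. Qed.

Lemma diag_form_gt0 N (e c : 'rV[C]_N) :
  c != 0 -> (forall j, c 0 j != 0 -> 0 < e 0 j) -> 0 < (c *m diag_mx e *m c ^t*) 0 0.
Proof.
move=> c_neq0 e_pos; rewrite mul_mx_diag mxE; under eq_bigr do rewrite mxE.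
have term_ge0 j : 0 <= c 0 j * e 0 j * (c ^t*) j 0.
  rewrite !mxE mulrAC; have [->|cj_neq0] := eqVneq (c 0 j) 0; first by rewrite !mul0r.
  by rewrite mulr_ge0 ?mul_conjC_ge0 ?ltW ?e_pos.
rewrite lt0r sumr_ge0 => [|j _]; last exact: term_ge0.
rewrite andbT; apply: contraNneq c_neq0 => /(psumr_eq0P (fun j _ => term_ge0 j)) sum0.
apply/eqP/rowP => j; rewrite mxE; apply: contra_eq (sum0 j isT).
move=> cj_neq0; rewrite !mxE mulrAC; apply/lt0r_neq0.
by rewrite mulr_gt0 ?mul_conjC_gt0 ?e_pos.
Qed.

Lemma unitary_conj_form N (U : 'M[C]_N) (X : 'M[C]_N) (c : 'rV[C]_N) :
  U \is unitarymx ->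
  (c *m U) *m (invmx U *m X *m U) *m (c *m U) ^t* = c *m X *m c ^t*.
Proof.
by move=> U_unitary; rewrite invmx_unitary // trmxC_mul !mulmxA !mulmxtVK.
Qed.

(* The vectors supported on J = {j | theta < e_j} span a #|J|-dimensional
   space on which the form, read in the basis U, is positive definite; when
   #|J| > k it meets the left kernel of B. *)
Lemma card_spectral_gt_le N k (U : 'M[C]_N) (e : 'rV[C]_N) (B : 'M[C]_(N, k)) θ :
  U \is unitarymx ->
  (forall v : 'rV_N, v *m B = 0 ->
     (v *m (invmx U *m diag_mx e *m U - θ%:M) *m v ^t*) 0 0 <= 0) ->
  (#|[pred j | (θ < e 0 j)%R]| <= k)%N.
Proof.
move=> U_unitary form_le0; rewrite leqNgt; apply/negP.
case/(exists_supported_row_ker (U *m B)) => c [c_neq0 cUB c_supp].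
have shift : invmx U *m diag_mx e *m U - θ%:M
             = invmx U *m diag_mx (e - const_mx θ) *m U.
  rewrite raddfB /= diag_const_mx mulmxBr mulmxBl mul_mx_scalar -scalemxAl.
  by rewrite mulVmx ?unitarymx_unit // scalemx1.
have := form_le0 (c *m U); rewrite -[c *m U *m B]mulmxA cUB => /(_ erefl).
rewrite shift unitary_conj_form // lt_geF //.
apply: diag_form_gt0 => // j cj_neq0; rewrite !mxE subr_gt0.
by apply: contraR cj_neq0 => j_notin; rewrite c_supp ?inE ?eqxx.
Qed.

Lemma low_rank_dec_hermitian N d (A : 'M[C]_N) θ a (G : 'M[C]_(N, d))
    (o l : 'cV[C]_N) :
  θ \is Num.real -> 0 <= a ->
  A - θ%:M = a *: (G *m G ^t*) + (o *m l ^t* + l *m o ^t*) -> A ^t* = A.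
Proof.
move=> θ_real a_ge0 A_dec; rewrite -[A](subrK θ%:M) A_dec.
rewrite !(linearD, linearZ) /= !map_mxD map_mxZ tr_scalar_mx map_scalar_mx.
rewrite !trmxC_mul !trmxCK /= (conj_Creal θ_real) (conj_Creal (ger0_real a_ge0)).
by rewrite [o *m _ + _]addrC.
Qed.

Lemma hermitian_low_rank_spectral_count N d (A : 'M[C]_N) θ a
    (G : 'M[C]_(N, d)) (o l : 'cV[C]_N) :
  θ \is Num.real -> 0 <= a ->
  A - θ%:M = a *: (G *m G ^t*) + (o *m l ^t* + l *m o ^t*) ->
  (#|[pred j | (θ < spectral_diag A 0 j)%R]| <= d.+1)%N /\
  (#|[pred j | (spectral_diag A 0 j < θ)%R]| <= 1)%N.
Proof.
move=> θ_real a_ge0 A_dec.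
have A_herm := low_rank_dec_hermitian θ_real a_ge0 A_dec.
have form_ker_o (v : 'rV[C]_N) : v *m o = 0 ->
    (v *m (A - θ%:M) *m v ^t*) 0 0 = a * ((v *m G) *m (v *m G) ^t*) 0 0.
  move=> vo; rewrite A_dec mulmxDr mulmxDl mulmxDr mulmxDl.
  rewrite !mulmxA vo !mul0mx add0r -[v *m l *m _ *m _]mulmxA -trmxC_mul vo.
  rewrite trmx0 map_mx0 mulmx0 addr0.
  by rewrite -scalemxAr -scalemxAl trmxC_mul !mulmxA mxE.
have A_normal : A \is normalmx by apply/normalmxP; rewrite A_herm.
have U_unitary := spectral_unitarymx A.
have A_spec := orthomx_spectralP A_normal.
split.
  rewrite -[d.+1]addn1; apply: (card_spectral_gt_le (B := row_mx G o) U_unitary) => v.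
  rewrite mul_mx_row -row_mx0 => /eq_row_mx[vG vo].
  by rewrite -A_spec form_ker_o // vG mul0mx mxE mulr0.
rewrite (eq_card (B := [pred j | (- θ < (- spectral_diag A) 0 j)%R])); last first.
  by move=> j; rewrite !inE mxE ltrN2.
apply: (card_spectral_gt_le (B := o) U_unitary) => v vo.
rewrite !raddfN /= mulNmx -A_spec -opprD mulmxN mulNmx mxE oppr_le0.
by rewrite form_ker_o // mulr_ge0 ?form_self_ge0.
Qed.

Lemma char_poly_normalmx N (A : 'M[C]_N) :
  A \is normalmx -> char_poly A = \prod_j ('X - (spectral_diag A 0 j)%:P).
Proof.
move=> /orthomx_spectralP {1}->; rewrite char_poly_similar ?spectral_unit //.
by rewrite char_poly_trig ?diag_mx_is_trig //; apply: eq_bigr => j _; rewrite mxE eqxx.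
Qed.

End SpectralCount.

Lemma card_pred_count (T : finType) (X : Type) (f : T -> X) (p : pred X) :
  #|[pred j | p (f j)]| = count p [seq f j | j <- enum T].
Proof.
rewrite count_map cardE /enum_mem size_filter count_filter.
by apply: eq_count => x /=; rewrite andbT.
Qed.

Section RealSymmetric.
Variable R : rcfType.
Local Notation toC := (real_complex R).
Local Notation cmx := (map_mx toC).
Local Open Scope sesquilinear_scope.

Lemma real_complex_real (x : R) : toC x \is Num.real.
Proof. by rewrite realE -(rmorph0 toC) !lecR le_total. Qed.

Lemma map_complex_trC m n (X : 'M[R]_(m, n)) : (cmx X) ^t* = cmx X^T.
Proof.
rewrite map_trmx -map_mx_comp; apply: eq_map_mx => x /=.
exact: conj_Creal (real_complex_real x).
Qed.

Lemma symmetric_low_rank_eigen_count N d (S : 'M[R]_N) (s : seq R) θ a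
    (G : 'M[R]_(N, d)) (o l : 'cV[R]_N) :
  0 <= a -> S - θ%:M = a *: (G *m G^T) + (o *m l^T + l *m o^T) ->
  char_poly S = \prod_(x <- s) ('X - x%:P) ->
  (count (> θ)%R s <= d.+1)%N /\ (count (< θ)%R s <= 1)%N.
Proof.
move=> a_ge0 S_dec char_S.
have SC_dec : cmx S - (toC θ)%:M = toC a *: (cmx G *m (cmx G) ^t*)
    + (cmx o *m (cmx l) ^t* + cmx l *m (cmx o) ^t*).
  rewrite !map_complex_trC -map_scalar_mx -map_mxB S_dec.
  by rewrite map_mxD map_mxZ map_mxD !map_mxM.
have aC_ge0 : 0 <= toC a by rewrite -(rmorph0 toC) lecR.
have [card_gt card_lt] :=
  hermitian_low_rank_spectral_count (real_complex_real θ) aC_ge0 SC_dec.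
have SC_normal : cmx S \is normalmx.
  by apply/normalmxP; rewrite (low_rank_dec_hermitian (real_complex_real θ) aC_ge0 SC_dec).
have eigen_perm : perm_eq (map toC s) [seq spectral_diag (cmx S) 0 j | j <- enum 'I_N].
  apply: prod_XsubC_eq; rewrite [RHS]big_map big_enum /= -char_poly_normalmx //.
  rewrite -map_char_poly char_S rmorph_prod big_map; apply: eq_bigr => x _.
  by rewrite /= map_polyXsubC.
have count_toC (p : pred R[i]) :
    count p (map toC s) = #|[pred j | p (spectral_diag (cmx S) 0 j)]|.
  by rewrite (permP eigen_perm) card_pred_count.
split.
  have -> : count (> θ)%R s = count (> toC θ)%R (map toC s).
    by rewrite count_map; apply: eq_count => x /=; rewrite ltcR.
  by rewrite count_toC.
have -> : count (< θ)%R s = count (< toC θ)%R (map toC s).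
  by rewrite count_map; apply: eq_count => x /=; rewrite ltcR.
by rewrite count_toC.
Qed.
End RealSymmetric.

Lemma edist_sqr (R : realType) d (x y : 'rV[R]_d) :
  edist x y ^+ 2 = \sum_(k < d) (x 0 k - y 0 k) ^+ 2.
Proof. by rewrite sqr_sqrtr // sumr_ge0 // => k _; rewrite sqr_ge0. Qed.

Section SeidelDecomposition.
Variables (R : realType) (d n h : nat) (delta : R).
Variables (P : 'I_n.-1 -> 'rV[R]_d) (Q : 'rV[R]_d).

Definition centered : 'M[R]_(n.-1, d) := \matrix_(i, k) (P i 0 k - Q 0 k).

Definition Dvec : 'cV[R]_(n.-1) :=
  \col_i (if (i < h)%N then delta ^+ 2 - 3 else 1 - 3 * delta ^+ 2).

Local Notation ones := (const_mx 1 : 'cV[R]_(n.-1)).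

Lemma Mmat_gram : Mmat P Q = 2%:R *: (centered *m centered^T).
Proof.
apply/matrixP => i j; rewrite !mxE !edist_sqr mulr_sumr -sumrN -!big_split /=.
by apply: eq_bigr => k _; rewrite !mxE; ring.
Qed.

Lemma Dmat_rank2 : Dmat n h delta = 2^-1 *: (Dvec *m ones^T + ones *m Dvec^T).
Proof.
apply/matrixP => i j; rewrite !mxE !big_ord1 !mxE.
by case: ltnP => _; case: ltnP => _; field.
Qed.

Lemma Smat_low_rank_dec : delta ^+ 2 != 1 ->
  Smat h delta P Q - ((1 + delta ^+ 2) / (1 - delta ^+ 2))%:M =
  (4%:R / (delta ^+ 2 - 1)) *: (centered *m centered^T) +
  (ones *m ((2 * (delta ^+ 2 - 1))^-1 *: Dvec)^T
   + ((2 * (delta ^+ 2 - 1))^-1 *: Dvec) *m ones^T).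
Proof.
move=> delta2_neq1.
have ne0 : delta ^+ 2 - 1 != 0 by rewrite subr_eq0.
have ne0' : 1 - delta ^+ 2 != 0 by rewrite subr_eq0 eq_sym.
rewrite /Smat Mmat_gram Dmat_rank2; apply/matrixP => i j; rewrite !mxE !big_ord1 !mxE.
by case: eqP => _; rewrite ?mulr1n ?mulr0n; field; rewrite ?ne0 ?ne0'.
Qed.
End SeidelDecomposition.

Theorem mainTheorem5 (R : realType) (d n h : nat) (delta : R)
  (P : 'I_n.-1 -> 'rV[R]_d) (Q : 'rV[R]_d) :
  (0 < n)%N ->
  1 < delta ->
  injective P ->
  (forall i : 'I_n.-1, P i != Q) ->
  (forall i j : 'I_n.-1, i != j ->
     edist (P i) (P j) = 1 \/ edist (P i) (P j) = delta) ->
  (h <= n.-1)%N ->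
  (forall i : 'I_n.-1, (i < h)%N -> edist (P i) Q = 1) ->
  (forall i : 'I_n.-1, (h <= i)%N -> edist (P i) Q = delta) ->
  forall s : seq R,
    size s = n.-1 ->
    sorted (fun x y => y <= x) s ->
    char_poly (Smat h delta P Q) = \prod_(x <- s) ('X - x%:P) ->
    (forall i : nat, (d + 2 <= i)%N -> (i <= n.-2)%N ->
       s`_(i.-1) = (1 + delta ^+ 2) / (1 - delta ^+ 2))
    /\ ((d + 3 <= n)%N -> s`_(n.-2) <= (1 + delta ^+ 2) / (1 - delta ^+ 2)).
Proof.
move=> _ gt1_delta _ _ _ _ _ _ s size_s sorted_s char_S.
have delta2_gt1 : 1 < delta ^+ 2 by rewrite expr2; nra.
have delta2_neq1 : delta ^+ 2 != 1 by rewrite gt_eqF.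
have gram_coef_ge0 : 0 <= 4%:R / (delta ^+ 2 - 1).
  by rewrite divr_ge0 ?ler0n // subr_ge0 ltW.
have [count_gt count_lt] := symmetric_low_rank_eigen_count gram_coef_ge0
  (Smat_low_rank_dec h P Q delta2_neq1) char_S.
split => [i le_d2_i le_i_n2 | le_d3_n].
  apply/le_anti/andP; split.
    by apply: (nth_le_of_count_gt 0 sorted_s count_gt); rewrite size_s; lia.
  by apply: (nth_ge_of_count_lt 0 sorted_s count_lt); rewrite size_s; lia.
by apply: (nth_le_of_count_gt 0 sorted_s count_gt); rewrite size_s; lia.
Qed.
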